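(* Let $\mathcal{R}$ be a set of rules on a finite set $Q$. Then $\mathcal{K}(\mathcal{R})=\mathcal{A}(\mathcal{R})$ if and only if for every pair of nontrivial implicates $(A,q)$, $(A',q')$ of $\mathcal{K}(\mathcal{R})$, both $((A\cup A')\setminus\{q,q'\},q)$ and $((A\cup A')\setminus\{q,q'\},q')$ are implicates of $\mathcal{K}(\mathcal{R})$.
   Context: A rule on $Q$ is a pair $(A,q)$ with $A\subseteq Q$, $q\in Q$; it is nontrivial if $q\notin A$. It accepts $Y\subseteq Q$ if $q\in Y$ implies $Y\cap A\neq\emptyset$. $\mathcal{K}(\mathcal{R})$ is the family of subsets accepted by all rules of $\mathcal{R}$, and $\mathcal{A}(\mathcal{R})$ is the family of $K\in\mathcal{K}(\mathcal{R})$ for which there is a sequence $\emptyset=Y_0\subseteq\dots\subseteq Y_k=K$ of members of $\mathcal{K}(\mathcal{R})$ with $|Y_{i+1}\setminus Y_i|=1$. A rule is an implicate of a family $\mathcal{F}$ if it accepts every member of $\mathcal{F}$. *)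

From mathcomp Require Import all_boot.
Set Implicit Arguments. Unset Strict Implicit. Unset Printing Implicit Defensive.

Section Rules.
Variable Q : finType.

Definition rule := ({set Q} * Q)%type.

Definition nontrivial (r : rule) : bool := r.2 \notin r.1.

Definition accepts (r : rule) (Y : {set Q}) : bool :=
  (r.2 \in Y) ==> (Y :&: r.1 != set0).

Definition Kfam (R : {set rule}) : {set {set Q}} :=
  [set Y | [forall r in R, accepts r Y]].

Definition accessible_chain (R : {set rule}) (s : seq {set Q}) : Prop :=
  [/\ head set0 s = set0,
      all (fun Y => Y \in Kfam R) s &
      forall i, i.+1 < size s ->
        nth set0 s i \subset nth set0 s i.+1 /\
        #|nth set0 s i.+1 :\: nth set0 s i| = 1].

Definition inA (R : {set rule}) (K : {set Q}) : Prop :=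
  K \in Kfam R /\
  exists s, [/\ accessible_chain R s, s <> [::] & last set0 s = K].

Definition implicate (F : {set {set Q}}) (r : rule) : Prop :=
  forall Y, Y \in F -> accepts r Y.

End Rules.

(** Forward: the accepting sets of both derived rules form a family that
    contains [set0] and survives adding one element inside [K(R)], since a
    single new element cannot be both [q] and [q'] at once; hence it contains
    every accessible set.  Backward: a nonempty [K] in [K(R)] always has an
    element [q] with [K :\ q] in [K(R)].  Otherwise every [x] in [K] is blocked
    by a rule [(B x, f x)] of [R] with [f x] in [K :\ x] and [B x] meeting [K]
    only in [x].  The exchange property chains these rules along the orbit of
    [f], giving implicates [(C, f^(k+1) q)] with [C] meeting [K] only in [q];
    since [K] is accepted, [f] has no periodic point in [K], which is absurd
    for a self-map of a finite set. *)

From mathcomp Require Import all_boot.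
Set Implicit Arguments. Unset Strict Implicit. Unset Printing Implicit Defensive.

Lemma iter_periodic (T : finType) (f : T -> T) (x : T) :
  exists i k, iter k.+1 f (iter i f x) = iter i f x.
Proof.
have /trajectP[i lt_i_o eq_i] := looping_order f x.
exists i, (order f x - i).-1.
by rewrite prednK ?subn_gt0 // -iterD subnK ?(ltnW lt_i_o).
Qed.

Section Families.
Variable Q : finType.
Implicit Types (R : {set rule Q}) (A B C K Y Z : {set Q}).

Definition exchange_closed R :=
  forall A A' (q q' : Q),
    nontrivial (A, q) -> nontrivial (A', q') ->
    implicate (Kfam R) (A, q) -> implicate (Kfam R) (A', q') ->
    implicate (Kfam R) ((A :|: A') :\: [set q; q'], q) /\
    implicate (Kfam R) ((A :|: A') :\: [set q; q'], q').

Lemma set0_Kfam R : set0 \in Kfam R.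
Proof. by rewrite inE; apply/forall_inP => r _; rewrite /accepts inE. Qed.

Lemma rule_implicate R r : r \in R -> implicate (Kfam R) r.
Proof. by move=> rR Y; rewrite inE => /forall_inP; apply. Qed.

Lemma inA_ind R (P : {set Q} -> Prop) :
  P set0 ->
  (forall Y Z, P Y -> Z \in Kfam R -> Y \subset Z -> #|Z :\: Y| = 1 -> P Z) ->
  forall K, inA R K -> P K.
Proof.
move=> P0 PS K [_ [s [[s0 sK s_step] s_nil <-]]].
suff Ps i : i < size s -> P (nth set0 s i).
  by rewrite -nth_last; apply: Ps; case: s s_nil {s0 sK s_step}.
elim: i => [|i IHi] lt_i; first by rewrite nth0 s0.
have [sub card1] := s_step i lt_i.
by apply: PS (IHi (ltnW lt_i)) _ sub card1; apply: (allP sK); apply: mem_nth.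
Qed.

Lemma inA0 R : inA R set0.
Proof.
split; first exact: set0_Kfam.
by exists [:: set0]; split => //; split => //=; rewrite ?set0_Kfam // => -[].
Qed.

Lemma inA_extend R Y Z :
  inA R Y -> Z \in Kfam R -> Y \subset Z -> #|Z :\: Y| = 1 -> inA R Z.
Proof.
move=> [_ [s [[s0 sK s_step] s_nil sY]]] ZK sub card1; split => //.
exists (rcons s Z); split; last by rewrite last_rcons.
- split; first by case: s s_nil s0 {sK s_step sY}.
  + by rewrite all_rcons ZK sK.
  move=> i; rewrite size_rcons ltnS => le_i; rewrite !nth_rcons le_i.
  have [lt_i1|ge_i1] := ltnP i.+1 (size s); first exact: s_step.
  have eq_i1 : i.+1 = size s by apply/eqP; rewrite eqn_leq le_i ge_i1.
  have -> : nth set0 s i = Y by rewrite -sY -nth_last -eq_i1.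
  by rewrite -eq_i1 eqxx.
- by case: s {s_nil s0 sK s_step sY}.
Qed.

Lemma meets_exchange_set (F : {set {set Q}}) A A' q q' Y Z :
  nontrivial (A, q) -> implicate F (A, q) -> Z \in F -> #|Z :\: Y| = 1 ->
  q \in Z -> q \notin Y -> q' \notin Y ->
  Z :&: ((A :|: A') :\: [set q; q']) != set0.
Proof.
rewrite /nontrivial /= => qA impA ZF card1 qZ qY q'Y.
have /set0Pn[y] := implyP (impA Z ZF) qZ; rewrite inE => /andP[yZ /= yA].
have /card_le1_eqP new_eq : #|Z :\: Y| <= 1 by rewrite card1.
have yq : y != q by apply: contraNneq qA => <-.
have yq' : y != q'.
  apply: contraNneq yq => eyq'; rewrite eyq' in yZ *.
  by apply/eqP/new_eq; rewrite inE ?qZ ?q'Y ?qY.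
by apply/set0Pn; exists y; rewrite !inE yZ yA negb_or yq yq'.
Qed.

Lemma inA_exchange_implicate R A A' q q' :
  nontrivial (A, q) -> nontrivial (A', q') ->
  implicate (Kfam R) (A, q) -> implicate (Kfam R) (A', q') ->
  forall Y, inA R Y ->
  (q \in Y) || (q' \in Y) -> Y :&: ((A :|: A') :\: [set q; q']) != set0.
Proof.
move=> ntA ntA' impA impA'; apply: inA_ind => [|Y Z IHY ZK sub card1].
  by rewrite !inE.
have [old|] := boolP ((q \in Y) || (q' \in Y)).
  move=> _; apply: contraNneq (IHY old) => eZ.
  by rewrite -subset0 -eZ setSI.
rewrite negb_or => /andP[qY q'Y] /orP[qZ|q'Z].
  exact: meets_exchange_set ntA impA ZK card1 qZ qY q'Y.
rewrite setUC [[set q; q']]setUC.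
exact: meets_exchange_set ntA' impA' ZK card1 q'Z q'Y qY.
Qed.

Lemma accessible_exchange_closed R :
  (forall K, K \in Kfam R -> inA R K) -> exchange_closed R.
Proof.
move=> KA A A' q q' ntA ntA' impA impA'.
by split=> Y /KA YA; apply/implyP => inY;
  apply: (inA_exchange_implicate ntA ntA' impA impA' YA); rewrite inY ?orbT.
Qed.

Section Unremovable.
Variables (R : {set rule Q}) (K : {set Q}).
Hypothesis exchange : exchange_closed R.
Hypothesis KK : K \in Kfam R.
Hypothesis unremovable : forall x, x \in K -> K :\ x \notin Kfam R.

Definition blocker (x : Q) : rule Q :=
  odflt (set0, x) [pick r in R | ~~ accepts r (K :\ x)].

Let B x := (blocker x).1.
Let f x := (blocker x).2.

Lemma blockerP x :
  x \in K -> [/\ blocker x \in R, f x \in K :\ x & [disjoint B x & K :\ x]].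
Proof.
move=> xK; rewrite /f /B /blocker; case: pickP => [r /andP[rR]|none] /=.
  by rewrite /accepts negb_imply negbK setI_eq0 disjoint_sym => /andP[-> ->].
have := unremovable xK; rewrite inE => /forall_inPn[r rR bad].
by have := none r; rewrite rR bad.
Qed.

Lemma blocker_f_in x : x \in K -> f x \in K.
Proof. by case/blockerP => _ /setD1P[]. Qed.

Lemma blocker_meet x y : x \in K -> y \in B x -> y \in K -> y = x.
Proof.
case/blockerP => _ _ /disjointFr dis yB yK; apply/eqP; apply: contraFT (dis y yB).
by rewrite !inE yK andbT.
Qed.

Lemma blocker_nontrivial x : x \in K -> nontrivial (B x, f x).
Proof.
move=> xK; rewrite /nontrivial /=; apply/negP => fB.
have /blockerP[_ /setD1P[fx_x _] _] := xK.
by rewrite (blocker_meet xK fB (blocker_f_in xK)) eqxx in fx_x.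
Qed.

Lemma blocker_implicate x : x \in K -> implicate (Kfam R) (B x, f x).
Proof.
by case/blockerP => rR _ _; apply: rule_implicate; rewrite -surjective_pairing.
Qed.

Lemma iter_blocker_in q n : q \in K -> iter n f q \in K.
Proof. by move=> qK; elim: n => //= n; apply: blocker_f_in. Qed.

Definition reaches (q p : Q) :=
  exists C, [/\ implicate (Kfam R) (C, p), nontrivial (C, p) & C :&: K \subset [set q]].

Lemma reaches_blocker q : q \in K -> reaches q (f q).
Proof.
move=> qK; exists (B q); split; [exact: blocker_implicate | exact: blocker_nontrivial |].
by apply/subsetP => y /setIP[yB yK]; rewrite inE (blocker_meet qK yB yK).
Qed.

Lemma reaches_step q t : t \in K -> reaches q t -> reaches q (f t).
Proof.
move=> tK [C [impC ntC CK]].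
have [_ impD] := exchange ntC (blocker_nontrivial tK) impC (blocker_implicate tK).
exists ((C :|: B t) :\: [set t; f t]); split => //.
  by rewrite /nontrivial !inE eqxx orbT.
apply/subsetP => y; rewrite !inE negb_or => /andP[/andP[/andP[yt _] /orP[yC|yB]] yK].
  by rewrite -in_set1 (subsetP CK) // inE yC.
by rewrite (blocker_meet tK yB yK) eqxx in yt.
Qed.

Lemma reaches_iter q k : q \in K -> reaches q (iter k.+1 f q).
Proof.
move=> qK; elim: k => [|k]; first exact: reaches_blocker.
exact/reaches_step/iter_blocker_in.
Qed.

Lemma not_reaches_self q : q \in K -> ~ reaches q q.
Proof.
move=> qK [C [impC ntC CK]].
have /set0Pn[y /setIP[yK yC]] := implyP (impC K KK) qK.
have /set1P eyq : y \in [set q] by apply: (subsetP CK); rewrite inE yC.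
by move: ntC; rewrite /nontrivial /= -eyq yC.
Qed.

Lemma unremovable_set0 : K = set0.
Proof.
apply/eqP; apply/set0Pn => -[q0 q0K].
have [i [k periodic]] := iter_periodic f q0.
have qK := iter_blocker_in i q0K.
by apply: (not_reaches_self qK); rewrite -{2}periodic; apply: reaches_iter.
Qed.

End Unremovable.

Lemma exchange_removable R K :
  exchange_closed R -> K \in Kfam R -> K != set0 ->
  exists2 q, q \in K & K :\ q \in Kfam R.
Proof.
move=> exchange KK K0.
have [/exists_inP[q qK KqK]|none] := boolP [exists q in K, K :\ q \in Kfam R].
  by exists q.
have K_0 : K = set0 by apply: (unremovable_set0 exchange KK); apply/exists_inPn.
by rewrite K_0 eqxx in K0.
Qed.

Lemma exchange_closed_accessible R :
  exchange_closed R -> forall K, K \in Kfam R -> inA R K.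
Proof.
move=> exchange K; elim: {K}_.+1 {-2}K (ltnSn #|K|) => // n IHn K le_K KK.
have [->|K0] := eqVneq K set0; first exact: inA0.
have [q qK KqK] := exchange_removable exchange KK K0.
apply: (inA_extend (IHn _ _ KqK)) => //.
- by rewrite -ltnS (leq_trans _ le_K) // ltnS (cardsD1 q K) qK.
- exact: subD1set.
- by rewrite setDDr setDv set0U (setIidPr _) ?cards1 // sub1set.
Qed.

End Families.

Theorem lemma3p10 (Q : finType) (R : {set rule Q}) :
  (forall K : {set Q}, K \in Kfam R <-> inA R K) <->
  (forall (A A' : {set Q}) (q q' : Q),
     nontrivial (A, q) -> nontrivial (A', q') ->
     implicate (Kfam R) (A, q) -> implicate (Kfam R) (A', q') ->
     implicate (Kfam R) ((A :|: A') :\: [set q; q'], q) /\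
     implicate (Kfam R) ((A :|: A') :\: [set q; q'], q')).
Proof.
split=> [KA | exchange K].
  by apply: accessible_exchange_closed => K /KA.
by split; [exact: exchange_closed_accessible | case].
Qed.
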